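(* Let $(V,\nu)$ and $(W,\mu)$ be strongly complete PN-spaces and let $T:V\to W$ be a linear operator that is continuous with respect to the strong topologies, i.e. $T\in B(V,W)$. If $T$ is surjective, then $T$ is an open mapping: for every strongly open set $U\subseteq V$, the set $T(U)$ is strongly open in $W$.
   Context: A distance distribution function is a map $F:[-\infty,+\infty]\to[0,1]$ that is nondecreasing, left-continuous on $\mathbb{R}$, with $F(-\infty)=0$, $F(+\infty)=1$ and $F(0)=0$; the set of these is $\Delta^+$. $\mathcal{D}^+\subseteq\Delta^+$ denotes the proper ones, i.e. those with $\lim_{x\to+\infty}F(x)=1$. $H_0\in\Delta^+$ is $H_0(x)=0$ for $x\le 0$ and $H_0(x)=1$ for $x>0$. For $F,G\in\Delta^+$ let $\tau_M(F,G)(x)=\sup\{\min(F(s),G(t)) : s+t=x\}$. In this paper a PN-space $(V,\nu)$ is a real vector space $V$ with a map $\nu:V\to\Delta^+$, $p\mapsto\nu_p$, such that for all $p,q\in V$: $\nu_p=H_0$ iff $p=0$; $\nu_{p+q}\ge\tau_M(\nu_p,\nu_q)$ pointwise; and $\nu_{\alpha p}(x)=\nu_p(x/|\alpha|)$ for all real $\alpha\neq0$ and $x\ge 0$. Standing assumption: $\nu_p\in\mathcal{D}^+$ for every $p\in V$. For $x\in V$ and $w\in(0,1)$ put $\|x\|_w=\sup\{t\in\mathbb{R}:\nu_x(t)<w\}$; for each $w$ this is a norm on $V$, and $w\mapsto\|x\|_w$ is nondecreasing. For $p\in V$, $r>0$, $w\in(0,1)$ put $B_w(p;r)=\{x\in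 V:\|x-p\|_w<r\}$. The strong topology on $V$ is generated by the neighbourhoods $N_p(t)=\{q\in V:\nu_{p-q}(t)>1-t\}$, $p\in V$, $t>0$; equivalently the family $\{B_w(p;r)\}$ is a basis for it. A sequence $(p_n)$ converges strongly to $p$ if for every $t>0$ one has $p_n\in N_p(t)$ for all large $n$; it is strongly Cauchy if for every $t>0$ there is $N$ with $\nu_{p_n-p_m}(t)>1-t$ for all $m,n>N$. $(V,\nu)$ is strongly complete if every strongly Cauchy sequence converges strongly. $B(V,W)$ denotes the set of linear operators $V\to W$ that are continuous for the strong topologies (equivalently, map bounded sets to bounded sets). *)

From Stdlib Require Import Reals.
Open Scope R_scope.

Record RVS := {
  car :> Type;
  vadd : car -> car -> car;
  vscal : R -> car -> car;
  vzero : car;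
  vopp : car -> car;
  vadd_assoc : forall x y z, vadd x (vadd y z) = vadd (vadd x y) z;
  vadd_comm : forall x y, vadd x y = vadd y x;
  vadd_0 : forall x, vadd x vzero = x;
  vadd_opp : forall x, vadd x (vopp x) = vzero;
  vscal_1 : forall x, vscal 1 x = x;
  vscal_assoc : forall a b x, vscal a (vscal b x) = vscal (a * b) x;
  vscal_distr_v : forall a x y, vscal a (vadd x y) = vadd (vscal a x) (vscal a y);
  vscal_distr_s : forall a b x, vscal (a + b) x = vadd (vscal a x) (vscal b x)
}.

Arguments vadd {r}. Arguments vscal {r}. Arguments vzero {r}. Arguments vopp {r}.

Definition vsub {V : RVS} (x y : V) : V := vadd x (vopp y).

(** An element F of Delta^+ is a map on
    [-oo,+oo]; since F(-oo)=0 and F(+oo)=1 are fixed, it is determined by its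
    restriction to R, which is what we store (a function R -> R). *)
Definition is_ddf (F : R -> R) : Prop :=
  (forall x, 0 <= F x <= 1) /\
  (forall x y, x <= y -> F x <= F y) /\
  (forall x eps, 0 < eps -> exists delta, 0 < delta /\
       forall y, x - delta < y <= x -> Rabs (F y - F x) < eps) /\
  F 0 = 0.

Definition is_proper_ddf (F : R -> R) : Prop :=
  is_ddf F /\
  forall eps, 0 < eps -> exists M, forall x, M < x -> Rabs (F x - 1) < eps.

Definition H0 (x : R) : R := if Rle_dec x 0 then 0 else 1.

(** nu_{p+q} >= tau_M(nu_p, nu_q) pointwise on R; for x real,
    tau_M(F,G)(x) = sup{min(F s, G t) : s + t = x}, and "a >= sup S" is
    literally "a is an upper bound of S". *)
Definition tauM_le (F G H : R -> R) : Prop :=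
  forall x s t, s + t = x -> Rmin (F s) (G t) <= H x.

(** PN-space (with the standing assumption that every nu_p is proper). *)
Definition is_PN (V : RVS) (nu : V -> R -> R) : Prop :=
  (forall p, is_proper_ddf (nu p)) /\
  (forall p, (forall x, nu p x = H0 x) <-> p = vzero) /\
  (forall p q, tauM_le (nu p) (nu q) (nu (vadd p q))) /\
  (forall (a : R) p x, a <> 0 -> 0 <= x -> nu (vscal a p) x = nu p (x / Rabs a)).

Definition Nbhd {V : RVS} (nu : V -> R -> R) (p : V) (t : R) (q : V) : Prop :=
  nu (vsub p q) t > 1 - t.

Definition strongly_open {V : RVS} (nu : V -> R -> R) (U : V -> Prop) : Prop :=
  forall p, U p -> exists t, 0 < t /\ forall q, Nbhd nu p t q -> U q.

Definition strongly_converges {V : RVS} (nu : V -> R -> R)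
  (pn : nat -> V) (p : V) : Prop :=
  forall t, 0 < t -> exists N, forall n, (n >= N)%nat -> Nbhd nu p t (pn n).

Definition strongly_Cauchy {V : RVS} (nu : V -> R -> R) (pn : nat -> V) : Prop :=
  forall t, 0 < t -> exists N, forall m n, (m > N)%nat -> (n > N)%nat ->
    nu (vsub (pn n) (pn m)) t > 1 - t.

Definition strongly_complete {V : RVS} (nu : V -> R -> R) : Prop :=
  forall pn, strongly_Cauchy nu pn -> exists p, strongly_converges nu pn p.

Definition is_linear {V W : RVS} (T : V -> W) : Prop :=
  (forall x y, T (vadd x y) = vadd (T x) (T y)) /\
  (forall (a : R) x, T (vscal a x) = vscal a (T x)).

Definition strongly_continuous {V W : RVS} (nu : V -> R -> R) (mu : W -> R -> R)
  (T : V -> W) : Prop :=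
  forall U, strongly_open mu U -> strongly_open nu (fun x => U (T x)).

Definition in_B {V W : RVS} (nu : V -> R -> R) (mu : W -> R -> R) (T : V -> W) : Prop :=
  is_linear T /\ strongly_continuous nu mu T.

Definition image {V W : RVS} (T : V -> W) (U : V -> Prop) : W -> Prop :=
  fun y => exists x, U x /\ T x = y.

From Stdlib Require Import Reals Lra Lia Classical ClassicalEpsilon.
Open Scope R_scope.

(* The Banach open mapping argument, with "[nu x t > 1 - t]" (x is t-small) in place of a
   norm ball: t-small vectors add with radii adding, are kept t-small by scalars of modulus
   at most 1, and absorb every vector.  Surjectivity covers W by the closures of the sets
   (n+1) T(t/2-small), so by Baire one of them contains a ball and the closure of
   T(t-small) contains an r-small ball around 0.  Correcting successively with radii
   t/2^(k+1), completeness of V and continuity of T then put the r-small ball inside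
   T(2t-small), and translating by linearity makes images of open sets open. *)

Section VectorAlgebra.
Variable V : RVS.
Implicit Types x y z : V.

Lemma vadd_0_l x : vadd vzero x = x.
Proof. rewrite vadd_comm; apply vadd_0. Qed.

Lemma vadd_opp_l x : vadd (vopp x) x = vzero.
Proof. rewrite vadd_comm; apply vadd_opp. Qed.

Lemma vadd_cancel_l x y z : vadd x y = vadd x z -> y = z.
Proof.
  intro H. rewrite <- (vadd_0_l y), <- (vadd_0_l z), <- (vadd_opp_l x).
  rewrite <- !vadd_assoc, H; reflexivity.
Qed.

Lemma vopp_unique x y : vadd x y = vzero -> y = vopp x.
Proof. intro H. apply (vadd_cancel_l x). rewrite H, vadd_opp; reflexivity. Qed.

Lemma vopp_involutive x : vopp (vopp x) = x.
Proof. symmetry; apply vopp_unique, vadd_opp_l. Qed.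

Lemma vopp_vadd x y : vopp (vadd x y) = vadd (vopp x) (vopp y).
Proof.
  symmetry; apply vopp_unique.
  rewrite vadd_assoc, (vadd_comm V x y), <- (vadd_assoc V y x), vadd_opp, vadd_0, vadd_opp.
  reflexivity.
Qed.

Lemma vscal_0_l x : vscal 0 x = vzero.
Proof.
  apply (vadd_cancel_l (vscal 0 x)).
  rewrite <- vscal_distr_s, vadd_0, Rplus_0_l; reflexivity.
Qed.

Lemma vscal_m1 x : vscal (-1) x = vopp x.
Proof.
  apply vopp_unique. rewrite <- (vscal_1 V x) at 1. rewrite <- vscal_distr_s.
  replace (1 + -1) with 0 by ring. apply vscal_0_l.
Qed.

Lemma vscal_opp a x : vscal a (vopp x) = vopp (vscal a x).
Proof. rewrite <- !vscal_m1, !vscal_assoc, Rmult_comm; reflexivity. Qed.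

Lemma vscal_vsub a x y : vscal a (vsub x y) = vsub (vscal a x) (vscal a y).
Proof. unfold vsub; rewrite vscal_distr_v, vscal_opp; reflexivity. Qed.

Lemma vsub_diag x : vsub x x = vzero.
Proof. apply vadd_opp. Qed.

Lemma vsub_0_r x : vsub x vzero = x.
Proof.
  unfold vsub. rewrite <- (vopp_unique vzero vzero) by apply vadd_0. apply vadd_0.
Qed.

Lemma vsub_0_l x : vsub vzero x = vopp x.
Proof. apply vadd_0_l. Qed.

Lemma vopp_vsub x y : vopp (vsub x y) = vsub y x.
Proof. unfold vsub; rewrite vopp_vadd, vopp_involutive, vadd_comm; reflexivity. Qed.

Lemma vsub_eq0 x y : vsub x y = vzero -> x = y.
Proof.
  intro H. apply vopp_unique in H.
  rewrite <- (vopp_involutive x), <- H, vopp_involutive; reflexivity.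
Qed.

Lemma vsub_chain x y z : vsub x z = vadd (vsub x y) (vsub y z).
Proof.
  unfold vsub. rewrite <- vadd_assoc. f_equal.
  rewrite vadd_assoc, vadd_opp_l, vadd_0_l; reflexivity.
Qed.

Lemma vsub_vsub_r x y : vsub x (vsub x y) = y.
Proof.
  unfold vsub. rewrite vopp_vadd, vopp_involutive, vadd_assoc, vadd_opp, vadd_0_l.
  reflexivity.
Qed.

Lemma vsub_vadd_r x y : vsub x (vadd x y) = vopp y.
Proof. unfold vsub. rewrite vopp_vadd, vadd_assoc, vadd_opp, vadd_0_l; reflexivity. Qed.

Lemma vsub_vadd x y z : vsub x (vadd y z) = vsub (vsub x y) z.
Proof. unfold vsub. rewrite vopp_vadd, vadd_assoc; reflexivity. Qed.

Lemma vsub_vsub x y z : vsub x (vsub y z) = vadd (vsub x y) z.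
Proof. unfold vsub. rewrite vopp_vadd, vopp_involutive, vadd_assoc; reflexivity. Qed.

Lemma vsub_vsub_vsub (c p q r : V) :
  vsub (vsub c p) (vsub (vsub c q) r) = vadd (vsub q p) r.
Proof.
  rewrite vsub_vsub. f_equal. unfold vsub. rewrite vopp_vadd, vopp_involutive.
  rewrite (vadd_comm V c), <- vadd_assoc, (vadd_assoc V c), vadd_opp, vadd_0_l.
  apply vadd_comm.
Qed.

End VectorAlgebra.

Section LinearMaps.
Variables (V W : RVS) (T : V -> W).
Hypothesis HT : is_linear T.

Lemma linear_0 : T vzero = vzero.
Proof.
  apply (vadd_cancel_l W (T vzero)). rewrite <- (proj1 HT), !vadd_0; reflexivity.
Qed.

Lemma linear_vsub x y : T (vsub x y) = vsub (T x) (T y).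
Proof.
  unfold vsub. rewrite (proj1 HT), <- !vscal_m1, (proj2 HT); reflexivity.
Qed.

End LinearMaps.

Definition small {V : RVS} (nu : V -> R -> R) (x : V) (t : R) : Prop := nu x t > 1 - t.

Section SmallVectors.
Variables (V : RVS) (nu : V -> R -> R).
Hypothesis HV : is_PN V nu.
Implicit Types x y z : V.

Lemma nu_bounds x s : 0 <= nu x s <= 1.
Proof. destruct HV as [Hp _]. destruct (Hp x) as [[Hb _] _]. apply Hb. Qed.

Lemma nu_mono x s t : s <= t -> nu x s <= nu x t.
Proof. destruct HV as [Hp _]. destruct (Hp x) as [[_ [Hm _]] _]. apply Hm. Qed.

Lemma small_pos x t : small nu x t -> 0 < t.
Proof. unfold small. pose proof (nu_bounds x t). lra. Qed.

Lemma small_0 t : 0 < t -> small nu vzero t.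
Proof.
  intro Ht. destruct HV as [_ [HH0 _]]. unfold small.
  rewrite (proj2 (HH0 vzero) eq_refl t). unfold H0. destruct (Rle_dec t 0); lra.
Qed.

Lemma small_mono x s t : s <= t -> small nu x s -> small nu x t.
Proof. unfold small; intros Hst Hs. pose proof (nu_mono x s t Hst). lra. Qed.

(* The triangle inequality of [tau_M], since [min(1 - s, 1 - t) >= 1 - (s + t)]. *)
Lemma small_vadd x y s t :
  small nu x s -> small nu y t -> small nu (vadd x y) (s + t).
Proof.
  intros Hx Hy. pose proof (small_pos x s Hx). pose proof (small_pos y t Hy).
  unfold small in *. destruct HV as [_ [_ [Htri _]]].
  pose proof (Htri x y (s + t) s t eq_refl) as Hmin.
  unfold Rmin in Hmin; destruct (Rle_dec (nu x s) (nu y t)); lra.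
Qed.

Lemma small_vsub_trans x y z s t :
  small nu (vsub x y) s -> small nu (vsub y z) t -> small nu (vsub x z) (s + t).
Proof. intros. rewrite (vsub_chain V x y z). apply small_vadd; assumption. Qed.

Lemma small_vscal a x t : Rabs a <= 1 -> small nu x t -> small nu (vscal a x) t.
Proof.
  intros Ha Hx. pose proof (small_pos x t Hx).
  destruct (Req_dec a 0) as [->|Ha0].
  - rewrite vscal_0_l. apply small_0; assumption.
  - unfold small in *. destruct HV as [_ [_ [_ Hscal]]].
    rewrite Hscal by lra.
    assert (Habs : 0 < Rabs a) by (apply Rabs_pos_lt; assumption).
    assert (Hle : t <= t / Rabs a).
    { apply (Rmult_le_reg_r (Rabs a)); [assumption|]. field_simplify; nra. }
    pose proof (nu_mono x _ _ Hle). lra.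
Qed.

Lemma small_vopp x t : small nu x t -> small nu (vopp x) t.
Proof.
  intro. rewrite <- vscal_m1. apply small_vscal; [|assumption].
  rewrite Rabs_left by lra; lra.
Qed.

Lemma small_vsubC x y t : small nu (vsub x y) t -> small nu (vsub y x) t.
Proof. intro. rewrite <- vopp_vsub. apply small_vopp; assumption. Qed.

Lemma small_vscal_ge1 a x t : 1 <= a -> small nu x (t / a) -> small nu (vscal a x) t.
Proof.
  intros Ha Hx. pose proof (small_pos x _ Hx) as Hta.
  unfold small in *. destruct HV as [_ [_ [_ Hscal]]].
  assert (0 < t) by (apply (Rmult_lt_reg_r (/ a)); [apply Rinv_0_lt_compat|]; lra).
  rewrite Hscal by lra. rewrite Rabs_right by lra.
  assert (t / a <= t) by (apply (Rmult_le_reg_r a); [lra|]; field_simplify; nra).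
  lra.
Qed.

Lemma small_all_eq0 x : (forall t, 0 < t -> small nu x t) -> x = vzero.
Proof.
  intro Hsmall. destruct HV as [Hp [HH0 _]].
  apply (HH0 x). intro z. unfold H0. pose proof (nu_bounds x z).
  destruct (Rle_dec z 0) as [Hz|Hz].
  - pose proof (nu_mono x z 0 Hz). destruct (Hp x) as [[_ [_ [_ Hnu0]]] _]. lra.
  - destruct (Rlt_dec (nu x z) 1) as [Hlt|]; [|lra].
    exfalso. set (t := Rmin z (1 - nu x z) / 2).
    assert (0 < t /\ t <= z /\ t < 1 - nu x z) as (Ht & Htz & Htnu)
      by (unfold t, Rmin; destruct Rle_dec; lra).
    pose proof (Hsmall t Ht). pose proof (nu_mono x t z Htz). unfold small in *. lra.
Qed.

(* Properness of [nu x] makes every vector absorbed by each neighbourhood of 0. *)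
Lemma small_absorbing x t : 0 < t -> exists n : nat, small nu (vscal (/ INR (S n)) x) t.
Proof.
  intro Ht. destruct HV as [Hp [_ [_ Hscal]]].
  destruct (proj2 (Hp x) t Ht) as [M HM].
  destruct (INR_unbounded (M / t)) as [n Hn].
  exists n. unfold small. assert (0 < INR (S n)) by (apply lt_0_INR; lia).
  assert (0 < / INR (S n)) by (apply Rinv_0_lt_compat; lra).
  rewrite Hscal by lra. rewrite Rabs_right by lra.
  assert (HMt : M < t / / INR (S n)).
  { rewrite S_INR in *. unfold Rdiv in *. rewrite Rinv_inv.
    apply (Rmult_lt_reg_r (/ t)); [apply Rinv_0_lt_compat; lra|].
    replace (t * (INR n + 1) * / t) with (INR n + 1) by (field; lra). lra. }
  specialize (HM _ HMt). apply Rabs_def2 in HM. lra.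
Qed.

End SmallVectors.

Lemma halving_eventually_lt (r : nat -> R) :
  (forall k, r (S k) <= r k / 2) ->
  forall e, 0 < e -> exists N, forall k, (N <= k)%nat -> r k < e.
Proof.
  intros Hhalf e He.
  assert (Hgeom : forall k, r k <= r 0%nat * (1/2)^k).
  { induction k; simpl; [lra|]. specialize (Hhalf k). lra. }
  destruct (Rle_lt_dec (r 0%nat) 0) as [Hr0|Hr0].
  - exists 0%nat. intros k _. specialize (Hgeom k).
    assert (0 <= (1/2)^k) by (apply pow_le; lra). nra.
  - destruct (pow_lt_1_zero (1/2) ltac:(rewrite Rabs_right; lra) (e / r 0%nat))
      as [N HN]; [apply Rdiv_lt_0_compat; assumption|].
    exists N. intros k Hk. specialize (HN k Hk). specialize (Hgeom k).
    rewrite Rabs_right in HN by (apply Rle_ge, pow_le; lra).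
    apply (Rmult_lt_compat_l (r 0%nat)) in HN; [|assumption].
    replace (r 0%nat * (e / r 0%nat)) with e in HN by (field; lra). lra.
Qed.

Section HalvingSteps.
Variables (V : RVS) (nu : V -> R -> R).
Hypothesis HV : is_PN V nu.
Variables (s : nat -> V) (r : nat -> R).
Hypothesis r_halving : forall k, r (S k) <= r k / 2.
Hypothesis s_steps : forall k, small nu (vsub (s k) (s (S k))) (r k).

(* Telescoping, using [r k <= 2 r k - 2 r (k+1)]. *)
Lemma halving_steps_dist m n : (m < n)%nat -> small nu (vsub (s m) (s n)) (2 * r m).
Proof.
  intro Hmn.
  assert (Htel : small nu (vsub (s m) (s n)) (2 * r m - 2 * r n)).
  { induction Hmn as [|n Hmn IH].
    - apply (small_mono V nu HV _ (r m)); [specialize (r_halving m); lra|apply s_steps].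
    - apply (small_mono V nu HV _ (2 * r m - 2 * r n + r n));
        [specialize (r_halving n); lra|].
      apply (small_vsub_trans V nu HV _ (s n)); [exact IH|apply s_steps]. }
  pose proof (small_pos V nu HV _ _ (s_steps n)).
  apply (small_mono V nu HV _ (2 * r m - 2 * r n)); [lra|exact Htel].
Qed.

Lemma halving_steps_Cauchy : strongly_Cauchy nu s.
Proof.
  intros e He.
  destruct (halving_eventually_lt r r_halving (e / 2)) as [N HN]; [lra|].
  exists N. intros m n Hm Hn.
  assert (Hdist : forall i j, (N < i)%nat -> (i < j)%nat ->
                    small nu (vsub (s i) (s j)) e).
  { intros i j Hi Hij. apply (small_mono V nu HV _ (2 * r i)).
    - specialize (HN i ltac:(lia)). lra.
    - apply halving_steps_dist; assumption. }
  destruct (Nat.lt_total n m) as [Hlt|[->|Hlt]].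
  - apply Hdist; assumption.
  - rewrite vsub_diag. apply small_0; assumption.
  - apply small_vsubC; [assumption|]. apply Hdist; assumption.
Qed.

Lemma halving_steps_limit_dist L :
  strongly_converges nu s L -> forall m d, 0 < d -> small nu (vsub (s m) L) (2 * r m + d).
Proof.
  intros Hconv m d Hd. destruct (Hconv d Hd) as [N HN].
  apply (small_vsub_trans V nu HV _ (s (max N (S m)))).
  - apply halving_steps_dist. lia.
  - apply small_vsubC; [assumption|]. apply HN. lia.
Qed.

End HalvingSteps.

Lemma small_below_open (W : RVS) (mu : W -> R -> R) (HW : is_PN W mu) e :
  strongly_open mu (fun w => exists s, s < e /\ small mu w s).
Proof.
  intros w [s [Hse Hw]]. exists ((e - s) / 2). split; [lra|].
  intros q Hq. exists (s + (e - s) / 2). split; [lra|].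
  rewrite <- (vsub_0_r W q), (vsub_chain W q w), vsub_0_r, vadd_comm.
  apply small_vadd; [assumption..|].
  apply small_vsubC; assumption.
Qed.

Lemma continuous_small (V W : RVS) (nu : V -> R -> R) (mu : W -> R -> R)
  (HV : is_PN V nu) (HW : is_PN W mu) (T : V -> W) (HT : in_B nu mu T) e :
  0 < e -> exists d, 0 < d /\ forall v, small nu v d -> small mu (T v) e.
Proof.
  intro He. destruct HT as [Hlin Hcont].
  destruct (Hcont _ (small_below_open W mu HW e) vzero) as [d [Hd Hpre]].
  { rewrite (linear_0 V W T Hlin). exists (e / 2). split; [lra|].
    apply small_0; [assumption|lra]. }
  exists d. split; [assumption|]. intros v Hv.
  destruct (Hpre v) as [s [Hse Hs]].
  { unfold Nbhd. rewrite vsub_0_l. apply small_vopp; assumption. }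
  apply (small_mono W mu HW _ s); [lra|assumption].
Qed.

Lemma dependent_choice_nat {A : Type} (P : nat -> A -> A -> Prop) :
  (forall n a, exists b, P n a b) ->
  forall a0, exists f : nat -> A, f 0%nat = a0 /\ forall n, P n (f n) (f (S n)).
Proof.
  intros Hstep a0.
  destruct (choice (fun na b => P (fst na) (snd na) b) (fun na => Hstep (fst na) (snd na)))
    as [g Hg].
  exists (fix f n := match n with O => a0 | S k => g (k, f k) end).
  split; [reflexivity|]. intro n. exact (Hg (n, _)).
Qed.

Definition in_closure {W : RVS} (mu : W -> R -> R) (S : W -> Prop) (w : W) : Prop :=
  forall e, 0 < e -> exists z, S z /\ small mu (vsub w z) e.

Section Closure.
Variables (W : RVS) (mu : W -> R -> R).
Hypothesis HW : is_PN W mu.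
Implicit Type S : W -> Prop.

Lemma in_closure_of_mem S w : S w -> in_closure mu S w.
Proof.
  intros Hw e He. exists w. rewrite vsub_diag. split; [assumption|apply small_0; assumption].
Qed.

Lemma in_closure_closed S w : in_closure mu (in_closure mu S) w -> in_closure mu S w.
Proof.
  intros Hw e He. destruct (Hw (e / 2)) as [z [Hz Hwz]]; [lra|].
  destruct (Hz (e / 2)) as [z' [Hz' Hzz']]; [lra|].
  exists z'. split; [assumption|]. replace e with (e / 2 + e / 2) by lra.
  apply (small_vsub_trans W mu HW _ z); assumption.
Qed.

Lemma closed_complement_ball S w :
  (forall w', in_closure mu S w' -> S w') -> ~ S w ->
  exists e, 0 < e /\ forall z, small mu (vsub w z) e -> ~ S z.
Proof.
  intros Hclosed Hw. apply NNPP. intro Hno. apply Hw, Hclosed. intros e He.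
  apply NNPP. intro Hfar. apply Hno. exists e. split; [assumption|].
  intros z Hz HSz. apply Hfar. exists z. split; assumption.
Qed.

Lemma closed_no_ball_avoid S :
  (forall w, in_closure mu S w -> S w) ->
  (forall w0 rho, 0 < rho -> ~ forall w, small mu (vsub w0 w) rho -> S w) ->
  forall w0 rho, 0 < rho -> exists w rho',
    small mu (vsub w0 w) (rho / 2) /\ 0 < rho' <= rho / 2 /\
    forall z, small mu (vsub w z) (2 * rho') -> ~ S z.
Proof.
  intros Hclosed Hnoball w0 rho Hrho.
  assert (Hout : exists w, small mu (vsub w0 w) (rho / 2) /\ ~ S w).
  { apply NNPP. intro Hin. apply (Hnoball w0 (rho / 2)); [lra|].
    intros w Hw. apply NNPP. intro HnS. apply Hin. exists w. split; assumption. }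
  destruct Hout as [w [Hw HnS]].
  destruct (closed_complement_ball S w Hclosed HnS) as [e [He Hball]].
  exists w, (Rmin (e / 2) (rho / 2)).
  pose proof (Rmin_l (e / 2) (rho / 2)). pose proof (Rmin_r (e / 2) (rho / 2)).
  assert (0 < Rmin (e / 2) (rho / 2)) by (apply Rmin_pos; lra).
  split; [assumption|split; [lra|]].
  intros z Hz. apply Hball. apply (small_mono W mu HW _ (2 * Rmin (e / 2) (rho / 2)));
    [lra|exact Hz].
Qed.

(* Otherwise nested balls, the k-th one avoiding [A k], close down on a point of no [A k]. *)
Lemma baire (cW : strongly_complete mu) (A : nat -> W -> Prop) :
  (forall n w, in_closure mu (A n) w -> A n w) -> (forall w, exists n, A n w) ->
  exists n w0 rho, 0 < rho /\ forall w, small mu (vsub w0 w) rho -> A n w.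
Proof.
  intros Hclosed Hcover. apply NNPP. intro Hno.
  assert (Hstep : forall n (b : W * R), exists b' : W * R, 0 < snd b ->
    small mu (vsub (fst b) (fst b')) (snd b / 2) /\ 0 < snd b' <= snd b / 2 /\
    forall z, small mu (vsub (fst b') z) (2 * snd b') -> ~ A n z).
  { intros n [w0 rho]. destruct (Rlt_dec 0 rho) as [Hrho|]; [|exists (w0, rho); simpl; lra].
    destruct (closed_no_ball_avoid (A n) (Hclosed n)) with w0 rho as [w [rho' Hw]];
      [|assumption|].
    - intros w0' rho' Hrho' Hball. apply Hno. exists n, w0', rho'. split; assumption.
    - exists (w, rho'). intros _. exact Hw. }
  destruct (dependent_choice_nat _ Hstep (vzero, 1)) as [b [Hb0 Hb]].
  assert (Hpos : forall k, 0 < snd (b k)).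
  { induction k as [|k IH]; [rewrite Hb0; simpl; lra|]. apply Hb, IH. }
  set (w := fun k => fst (b k)). set (r := fun k => snd (b k) / 2).
  assert (Hhalf : forall k, r (S k) <= r k / 2).
  { intro k. unfold r. pose proof (Hb k (Hpos k)). lra. }
  assert (Hsteps : forall k, small mu (vsub (w k) (w (S k))) (r k)).
  { intro k. apply (Hb k (Hpos k)). }
  destruct (cW w (halving_steps_Cauchy W mu HW w r Hhalf Hsteps)) as [L HL].
  destruct (Hcover L) as [n HnL].
  apply (Hb n (Hpos n)) with (z := L); [|assumption].
  pose proof (halving_steps_limit_dist W mu HW w r Hhalf Hsteps L HL (S n) _ (Hpos (S n))).
  unfold r in *. replace (2 * snd (b (S n))) with (2 * (snd (b (S n)) / 2) + snd (b (S n)))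
    by lra. assumption.
Qed.

End Closure.

Section OpenMapping.
Variables (V W : RVS) (nu : V -> R -> R) (mu : W -> R -> R).
Hypotheses (HV : is_PN V nu) (HW : is_PN W mu).
Variable T : V -> W.
Hypothesis HL : is_linear T.

(* Differences of the points of a ball around [w0] fill a ball around 0. *)
Lemma image_small_dense (cW : strongly_complete mu) (Hsurj : forall y, exists x, T x = y) t :
  0 < t -> exists r, 0 < r /\
    forall y, small mu y r -> in_closure mu (image T (fun x => small nu x t)) y.
Proof.
  intro Ht.
  set (A := fun n => in_closure mu
         (image (fun x => vscal (INR (S n)) (T x)) (fun x => small nu x (t / 2)))).
  destruct (baire W mu HW cW A) as [n [w0 [rho [Hrho Hball]]]].
  - intros n w. apply in_closure_closed; assumption.
  - intro w. destruct (Hsurj w) as [x0 <-].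
    destruct (small_absorbing V nu HV x0 (t / 2)) as [n Hn]; [lra|].
    exists n. apply in_closure_of_mem; [assumption|].
    exists (vscal (/ INR (S n)) x0). split; [assumption|].
    rewrite (proj2 HL), vscal_assoc, Rinv_r, vscal_1; [reflexivity|apply not_0_INR; lia].
  - set (N := INR (S n)).
    assert (HN : 1 <= N) by (unfold N; rewrite S_INR; pose proof (pos_INR n); lra).
    exists (rho / N). split; [apply Rdiv_lt_0_compat; lra|]. intros y Hy e He.
    assert (Hw0 : A n w0) by (apply Hball; rewrite vsub_diag; apply small_0; assumption).
    assert (Hw1 : A n (vsub w0 (vscal N y))).
    { apply Hball. rewrite vsub_vsub_r. apply small_vscal_ge1; assumption. }
    destruct (Hw0 (e / 2)) as [z1 [[x1 [Hx1 <-]] Hz1]]; [lra|].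
    destruct (Hw1 (e / 2)) as [z2 [[x2 [Hx2 <-]] Hz2]]; [lra|].
    exists (T (vsub x1 x2)). split.
    { exists (vsub x1 x2). split; [|reflexivity].
      replace t with (t / 2 + t / 2) by lra. apply small_vadd, small_vopp; assumption. }
    assert (Hdiff : vsub y (T (vsub x1 x2)) = vscal (/ N)
      (vsub (vsub w0 (vscal N (T x1))) (vsub (vsub w0 (vscal N y)) (vscal N (T x2))))).
    { rewrite vsub_vsub_vsub, linear_vsub, vsub_vsub by assumption.
      rewrite vscal_distr_v, vscal_vsub, !vscal_assoc, Rinv_l, !vscal_1 by lra.
      reflexivity. }
    rewrite Hdiff. apply small_vscal; [assumption| |].
    + rewrite Rabs_right by (apply Rle_ge, Rlt_le, Rinv_0_lt_compat; lra).
      rewrite <- Rinv_1. apply Rinv_le_contravar; lra.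
    + replace e with (e / 2 + e / 2) by lra. apply small_vadd, small_vopp; assumption.
Qed.

Lemma successive_approximation (t r : nat -> R) (y : W) :
  (forall k, 0 < r k) ->
  (forall k y', small mu y' (r k) -> in_closure mu (image T (fun x => small nu x (t k))) y') ->
  small mu y (r 0%nat) ->
  exists s : nat -> V, s 0%nat = vzero /\
    (forall k, small nu (vsub (s k) (s (S k))) (t k)) /\
    (forall k, small mu (vsub y (T (s k))) (r k)).
Proof.
  intros Hr Hdense Hy.
  assert (Hstep : forall k s, exists s', small mu (vsub y (T s)) (r k) ->
    small nu (vsub s s') (t k) /\ small mu (vsub y (T s')) (r (S k))).
  { intros k s. destruct (classic (small mu (vsub y (T s)) (r k))) as [Hs|Hs];
      [|exists s; intro; contradiction].
    destruct (Hdense k _ Hs (r (S k)) (Hr (S k))) as [z [[x [Hx <-]] Hz]].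
    exists (vadd s x). intros _. split.
    - rewrite vsub_vadd_r. apply small_vopp; assumption.
    - rewrite (proj1 HL), vsub_vadd. assumption. }
  destruct (dependent_choice_nat _ Hstep vzero) as [s [Hs0 Hs]].
  assert (Hres : forall k, small mu (vsub y (T (s k))) (r k)).
  { induction k as [|k IH].
    - rewrite Hs0, linear_0, vsub_0_r by assumption. assumption.
    - apply Hs, IH. }
  exists s. split; [assumption|split; [|assumption]]. intro k. apply Hs, Hres.
Qed.

(* The corrections [x_k] have radii [t / 2^(k+1)], summing to [t]; the residuals [y - T s_k]
   tend to 0 and, by continuity, so does [T x - T s_k]. *)
Lemma small_ball_in_image (cV : strongly_complete nu) (cW : strongly_complete mu)
  (Hcont : strongly_continuous nu mu T) (Hsurj : forall y, exists x, T x = y) t :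
  0 < t -> exists r, 0 < r /\
    forall y, small mu y r -> image T (fun x => small nu x (2 * t)) y.
Proof.
  intro Ht. set (tk := fun k : nat => t * (1 / 2) ^ S k).
  assert (Htk_pos : forall k, 0 < tk k)
    by (intro k; apply Rmult_lt_0_compat; [assumption|apply pow_lt; lra]).
  assert (Htk_half : forall k, tk (S k) <= tk k / 2) by (intro k; unfold tk; simpl; lra).
  assert (Hradius : forall k, exists r, (0 < r <= tk k) /\
    forall y, small mu y r -> in_closure mu (image T (fun x => small nu x (tk k))) y).
  { intro k. destruct (image_small_dense cW Hsurj (tk k) (Htk_pos k)) as [r [Hr Hdense]].
    exists (Rmin r (tk k)). split.
    - split; [apply Rmin_pos; auto|apply Rmin_r].
    - intros y Hy. apply Hdense, (small_mono W mu HW _ (Rmin r (tk k)));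
        [apply Rmin_l|exact Hy]. }
  destruct (choice _ Hradius) as [r Hr].
  exists (r 0%nat). split; [apply Hr|]. intros y Hy.
  destruct (successive_approximation tk r y (fun k => proj1 (proj1 (Hr k)))
              (fun k => proj2 (Hr k)) Hy) as [s [Hs0 [Hsteps Hres]]].
  destruct (cV s (halving_steps_Cauchy V nu HV s tk Htk_half Hsteps)) as [x Hx].
  exists x. split.
  - pose proof (halving_steps_limit_dist V nu HV s tk Htk_half Hsteps x Hx 0 t Ht) as Hx0.
    rewrite Hs0, vsub_0_l in Hx0. apply small_vopp in Hx0; [|assumption].
    rewrite vopp_involutive in Hx0.
    apply (small_mono V nu HV _ (2 * tk 0%nat + t)); [unfold tk; simpl; lra|exact Hx0].
  - apply vsub_eq0, (small_all_eq0 W mu HW). intros e He.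
    destruct (continuous_small V W nu mu HV HW T (conj HL Hcont) (e / 2)) as [d [Hd Hcd]];
      [lra|].
    destruct (Hx d Hd) as [N1 HN1].
    destruct (halving_eventually_lt tk Htk_half (e / 2)) as [N2 HN2]; [lra|].
    set (n := max N1 N2). replace e with (e / 2 + e / 2) by lra.
    apply (small_vsub_trans W mu HW _ (T (s n))).
    + rewrite <- linear_vsub by assumption. apply Hcd, HN1. lia.
    + apply small_vsubC; [assumption|].
      apply (small_mono W mu HW _ (r n)); [|apply Hres].
      pose proof (Hr n). specialize (HN2 n ltac:(lia)). lra.
Qed.

End OpenMapping.

Theorem theorem4p5 (V W : RVS) (nu : V -> R -> R) (mu : W -> R -> R)
  (HV : is_PN V nu) (HW : is_PN W mu)
  (cV : strongly_complete nu) (cW : strongly_complete mu)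
  (T : V -> W) (HT : in_B nu mu T)
  (Hsurj : forall y : W, exists x : V, T x = y) :
  forall U : V -> Prop, strongly_open nu U -> strongly_open mu (image T U).
Proof.
  intros U HU y [x0 [Hx0 <-]].
  destruct (HU x0 Hx0) as [t [Ht Hball]].
  destruct (small_ball_in_image V W nu mu HV HW T (proj1 HT) cV cW (proj2 HT) Hsurj (t / 2))
    as [r [Hr Hsmall]]; [lra|].
  exists r. split; [assumption|]. intros q Hq.
  destruct (Hsmall _ Hq) as [x [Hx HTx]].
  exists (vsub x0 x). split.
  - apply Hball. unfold Nbhd. rewrite vsub_vsub_r. replace t with (2 * (t / 2)) by lra.
    exact Hx.
  - rewrite linear_vsub, HTx, vsub_vsub_r by apply HT. reflexivity.
Qed.
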